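(* Let $X,Y$ be based spaces, $r\colon X\to Y$ and $l\colon Y\to X$ based maps, and $h\colon X\times[0,1]\to X$ a based homotopy from $\mathrm{id}_X$ to $l\circ r$. Then there are explicit mutually inverse homotopy equivalences $\chi\colon\mathrm{hofib}(r)\to\Omega\,\mathrm{hofib}(l)$ and $\chi^{-1}\colon\Omega\,\mathrm{hofib}(l)\to\mathrm{hofib}(r)$ (homotopy fibres over the basepoints).
   Context: Homotopy fibres use the path-space model: $\mathrm{hofib}(r)=\{(x,\gamma)\in X\times\mathrm{Map}([0,1],Y):\gamma(0)=r(x),\gamma(1)=*\}$, and $\Omega$ denotes based loops. *)

From HB Require Import structures.
From mathcomp Require Import all_boot all_order all_algebra.
From mathcomp Require Import all_classical all_reals all_analysis.

Unset Printing Implicit Defensive.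

Import Order.TTheory GRing.Theory Num.Theory.
Import numFieldNormedType.Exports.
Local Open Scope classical_set_scope.
Local Open Scope ring_scope.

Notation unit_interval R := (set_type (`[0%R, 1%R]%classic : set R)).

Lemma in01_0 (R : realType) : (0:R) \in (`[0%R, 1%R]%classic : set R).
Proof. by apply/mem_set; rewrite /= in_itv /= lexx ler01. Qed.

Lemma in01_1 (R : realType) : (1:R) \in (`[0%R, 1%R]%classic : set R).
Proof. by apply/mem_set; rewrite /= in_itv /= lexx ler01. Qed.

Definition i0 {R : realType} : unit_interval R := exist _ (0:R) (in01_0 R).
Definition i1 {R : realType} : unit_interval R := exist _ (1:R) (in01_1 R).

(* Path-space model of the homotopy fibre of r : X -> Y over y0:
   pairs (x, gamma) with gamma : [0,1] -> Y continuous, gamma 0 = r x,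
   gamma 1 = y0; topologised as a subspace of X x Map([0,1], Y), the
   mapping space carrying the compact-open topology. *)
Definition hofib_set (R : realType) {X Y : topologicalType} (r : X -> Y) (y0 : Y)
  : set (X * {compact-open, unit_interval R -> Y}) :=
  [set p : X * {compact-open, unit_interval R -> Y} | (continuous (p.2 : unit_interval R -> Y)) /\
     (p.2 : unit_interval R -> Y) i0 = r p.1 /\ (p.2 : unit_interval R -> Y) i1 = y0].

Definition hofib (R : realType) {X Y : topologicalType} (r : X -> Y) (y0 : Y) : Type :=
  set_type (hofib_set R r y0).

Lemma hofib_pt_subproof (R : realType) {X Y : topologicalType} (r : X -> Y)
  {x0 : X} {y0 : Y} (hr : r x0 = y0) :
  ((x0, (cst y0 : {compact-open, unit_interval R -> Y})) : X * _) \in hofib_set R r y0.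
Proof. apply/mem_set; split; first exact: cst_continuous. by split. Qed.

Definition hofib_pt (R : realType) {X Y : topologicalType} (r : X -> Y)
  {x0 : X} {y0 : Y} (hr : r x0 = y0) : hofib R r y0 :=
  exist _ (x0, cst y0) (hofib_pt_subproof R r hr).

Definition loop_set (R : realType) {F : topologicalType} (f0 : F)
  : set {compact-open, unit_interval R -> F} :=
  [set g : {compact-open, unit_interval R -> F} | (continuous (g : unit_interval R -> F)) /\
     (g : unit_interval R -> F) i0 = f0 /\ (g : unit_interval R -> F) i1 = f0].

Definition loops (R : realType) {F : topologicalType} (f0 : F) : Type :=
  set_type (loop_set R f0).

Definition homotopic (R : realType) {A B : topologicalType} (f g : A -> B) : Prop :=
  exists H : A * unit_interval R -> B,
    (continuous H) /\ (forall a, H (a, i0) = f a) /\ (forall a, H (a, i1) = g a).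

Definition homotopy_inverse (R : realType) {A B : topologicalType}
  (f : A -> B) (g : B -> A) : Prop :=
  (continuous f) /\ (continuous g) /\
  homotopic R (g \o f) idfun /\ homotopic R (f \o g) idfun.

From HB Require Import structures.
From mathcomp Require Import all_boot all_order all_algebra.
From mathcomp Require Import all_classical all_reals all_analysis.
From mathcomp Require Import lra.
Import numFieldNormedType.Exports.
Import Order.TTheory GRing.Theory Num.Theory.

(* A point (x, g) of hofib(r)
   determines the path  w = h(x,-) . (l o g)  in X from x to x0, and the loop
   beta = (r o w)^-1 . g  at y0 in Y.  Each point beta(s) of this loop is
   lifted to hofib(l) by a path from l(beta(s)) to x0, built from h and w on
   the first half of the loop and from the tail of l o g on the second half.
   This is chi : hofib(r) -> Omega hofib(l).  Its inverse forgets the paths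
   in X and keeps the loop in Y, based at x0:  chi_inv(s |-> (b s, d s)) =
   (x0, b). *)

Local Open Scope classical_set_scope.
Local Open Scope ring_scope.

Lemma into_sub_cont {T U : topologicalType} (A : set U) (f : T -> set_type A) :
  continuous (fun t => sval (f t)) -> continuous f.
Proof. exact: continuous_comp_initial. Qed.

Lemma sval_cont {U : topologicalType} (A : set U) :
  continuous (fun x : set_type A => sval x).
Proof. exact: initial_continuous. Qed.

Section UnitInterval.
Context {R : realType}.
Local Notation I := (unit_interval R).

(* Clamping x into [0,1] gives a continuous retraction R -> I; all the
   reparametrisations of paths below are written as toI of a real formula. *)
Definition clamp (x : R) : R := Num.min 1 (Num.max 0 x).

Lemma clamp_in (x : R) : clamp x \in (`[0%R, 1%R]%classic : set R).
Proof.
apply/mem_set; rewrite /= in_itv /= /clamp.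
by rewrite le_min ler01 /= le_max lexx /= ge_min lexx.
Qed.

Definition toI (x : R) : I := exist _ (clamp x) (clamp_in x).

Lemma clamp_id (x : R) : 0 <= x <= 1 -> clamp x = x.
Proof. by move=> /andP[x0 x1]; rewrite /clamp max_r // min_r. Qed.

Lemma unit_ge0 (s : I) : 0 <= sval s.
Proof. by case: s => x /= /set_mem; rewrite /= in_itv /= => /andP[]. Qed.

Lemma unit_le1 (s : I) : sval s <= 1.
Proof. by case: s => x /= /set_mem; rewrite /= in_itv /= => /andP[]. Qed.

Lemma toI_valE (x : R) (s : I) : x = sval s -> toI x = s.
Proof.
move=> ->; apply: val_inj => /=; apply: clamp_id.
by rewrite unit_ge0 unit_le1.
Qed.

Lemma toI_val (s : I) : toI (sval s) = s.
Proof. exact: toI_valE. Qed.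

Lemma toI_le0 (x : R) : x <= 0 -> toI x = i0.
Proof. by move=> x0; apply: val_inj; rewrite /= /clamp max_l // min_r // ler01. Qed.

Lemma toI_ge1 (x : R) : 1 <= x -> toI x = i1.
Proof. by move=> x1; apply: val_inj; rewrite /= /clamp min_l // le_max x1 orbT. Qed.

Lemma toI_eq (x y : R) : x = y -> toI x = toI y.
Proof. by move=> ->. Qed.

Lemma clamp_cont : continuous clamp.
Proof.
move=> x; apply: (@continuous_min R R (fun _ => 1)); first exact: cvg_cst.
by apply: (@continuous_max R R (fun _ => 0) id); [exact: cvg_cst | exact: cvg_id].
Qed.

Lemma toI_cont : continuous toI.
Proof. exact/continuous_comp_initial/clamp_cont. Qed.

(* I is the continuous image of the compact segment [0,1] under toI. *)
Lemma unit_compact : compact [set: I].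
Proof.
have -> : [set: I] = toI @` `[0%R, 1%R]%classic.
  apply/seteqP; split => // s _; exists (sval s); last exact: toI_val.
  by case: s => x /= /set_mem.
apply: continuous_compact; first exact/continuous_subspaceT/toI_cont.
exact: segment_compact.
Qed.

(* Disjoint open neighbourhoods in R pull back along the inclusion I -> R. *)
Lemma unit_hausdorff : hausdorff_space I.
Proof.
rewrite open_hausdorff => p q pq.
have vpq : sval p != sval q by apply: contra pq => /eqP pq'; apply/eqP/val_inj.
have := @order_hausdorff _ R; rewrite open_hausdorff => /(_ _ _ vpq).
case=> -[A B] /= [pA qB] [oA oB AB0].
exists (sval @^-1` A, sval @^-1` B) => /=.
  by split; rewrite inE; [move: pA | move: qB]; rewrite inE.
have open_pre C : open C -> open (sval @^-1` C : set I).
  by move=> oC; exact: (open_comp (fun x _ => sval_cont _ x)).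
split; [exact: open_pre | exact: open_pre |].
apply/eqP; apply/seteqP; split => // x [/= Ax Bx].
by move/eqP: AB0; rewrite -subset0 => /(_ (sval x)); apply.
Qed.

Lemma unit_locally_compact : locally_compact [set: I].
Proof.
move=> x _; rewrite withinET; exists setT; first exact: filterT.
by split; [exact: unit_compact | exact: closedT].
Qed.

End UnitInterval.

Section ContinuityCombinators.
Context {R : realType}.
Local Notation I := (unit_interval R).

(* Exponential law for I: since I is locally compact Hausdorff, continuous
   maps into the compact-open space of paths (with continuous values)
   correspond to continuous maps on Z * I. *)
Lemma uncurry_cont {Z W : topologicalType} (F : Z -> {compact-open, I -> W}) :
  continuous F -> (forall z, continuous (F z : I -> W)) ->
  continuous (fun p : Z * I => (F p.1 : I -> W) p.2).
Proof.
move=> cF cFz.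
have := continuous_uncurry (@unit_locally_compact R) (@unit_hausdorff R) cF cFz.
by rewrite /uncurry (_ : (fun p : Z * I => _) = (fun p => (F p.1 : I -> W) p.2)) //;
  apply: funext => -[].
Qed.

Lemma curry_cont {Z W : topologicalType} (f : Z * I -> W) :
  continuous f -> continuous (fun z => ((fun s => f (z, s)) : {compact-open, I -> W})).
Proof. exact: continuous_curry_fun. Qed.

Lemma comp_cont {T U V : topologicalType} (f : T -> U) (g : U -> V) :
  continuous f -> continuous g -> continuous (fun t => g (f t)).
Proof. by move=> cf cg t; apply: continuous_comp; [exact: cf | exact: cg]. Qed.

Lemma pair_cont {T U V : topologicalType} (f : T -> U) (g : T -> V) :
  continuous f -> continuous g -> continuous (fun t => (f t, g t)).
Proof. by move=> cf cg t; apply: cvg_pair; [exact: cf | exact: cg]. Qed.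

Lemma id_cont {T : topologicalType} : continuous (fun t : T => t).
Proof. by move=> t; exact: cvg_id. Qed.

Lemma fst_cont {T U : topologicalType} : continuous (@fst T U).
Proof. by move=> t; exact: cvg_fst. Qed.

Lemma snd_cont {T U : topologicalType} : continuous (@snd T U).
Proof. by move=> t; exact: cvg_snd. Qed.

Lemma cst_cont {T U : topologicalType} (u : U) : continuous (fun _ : T => u).
Proof. by move=> t; exact: cvg_cst. Qed.

Lemma radd_cont {T : topologicalType} (f g : T -> R) :
  continuous f -> continuous g -> continuous (fun t => f t + g t).
Proof. by move=> cf cg t; apply: cvgD; [exact: cf | exact: cg]. Qed.

Lemma rmul_cont {T : topologicalType} (f g : T -> R) :
  continuous f -> continuous g -> continuous (fun t => f t * g t).
Proof. by move=> cf cg t; apply: cvgM; [exact: cf | exact: cg]. Qed.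

Lemma ropp_cont {T : topologicalType} (f : T -> R) :
  continuous f -> continuous (fun t => - f t).
Proof. by move=> cf t; apply: cvgN; exact: cf. Qed.

Lemma rmin_cont {T : topologicalType} (f g : T -> R) :
  continuous f -> continuous g -> continuous (fun t => Num.min (f t) (g t)).
Proof. by move=> cf cg t; exact: (continuous_min (cf t) (cg t)). Qed.

Lemma rmax_cont {T : topologicalType} (f g : T -> R) :
  continuous f -> continuous g -> continuous (fun t => Num.max (f t) (g t)).
Proof. by move=> cf cg t; exact: (continuous_max (cf t) (cg t)). Qed.

Lemma paste_cont {T W : topologicalType} (c : T -> R) (f g : T -> W) :
  continuous c -> continuous f -> continuous g ->
  (forall t, c t = 0 -> f t = g t) ->
  continuous (fun t => if c t <= 0 then f t else g t).
Proof.
move=> cc cf cg fg; apply/continuous_subspace_setT.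
have -> : [set: T] = (c @^-1` [set x | x <= 0]) `|` (c @^-1` [set x | 0 <= x]).
  apply/seteqP; split => // t _ /=.
  by case: (lerP (c t) 0) => ct; [left | right; exact: ltW].
apply: withinU_continuous.
- by apply: preimage_closed => //; exact: closed_le.
- by apply: preimage_closed => //; exact: closed_ge.
- apply: (@subspace_eq_continuous _ _ _ f); last exact: continuous_subspaceT.
  by move=> t /set_mem /= ct; rewrite /from_subspace ct.
- apply: (@subspace_eq_continuous _ _ _ g); last exact: continuous_subspaceT.
  move=> t /set_mem /= ct; rewrite /from_subspace; case: ifPn => // ct'.
  by apply/esym/fg/eqP; rewrite eq_le ct ct'.
Qed.

Lemma toI_comp_cont {T : topologicalType} (f : T -> R) :
  continuous f -> continuous (fun t => toI (f t)).
Proof. by move=> cf; exact: (comp_cont _ _ cf toI_cont). Qed.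

Lemma unit_val_comp_cont {T : topologicalType} (f : T -> I) :
  continuous f -> continuous (fun t => sval (f t)).
Proof. by move=> cf; exact: (comp_cont _ _ cf (sval_cont _)). Qed.

End ContinuityCombinators.

Ltac continuity_step := lazymatch goal with
  | |- continuous (fun _ => ?c) => exact: cst_cont
  | |- continuous (fun p => p.1) => exact: fst_cont
  | |- continuous (fun p => p.2) => exact: snd_cont
  | |- continuous (fun p => p) => exact: id_cont
  | |- continuous (@fst _ _) => exact: fst_cont
  | |- continuous (@snd _ _) => exact: snd_cont
  | |- continuous (fun p => (@?a p, @?b p)) => apply: (pair_cont a b)
  | |- continuous (fun p => (@?a p) + (@?b p)) => apply: (radd_cont a b)
  | |- continuous (fun p => (@?a p) * (@?b p)) => apply: (rmul_cont a b)
  | |- continuous (fun p => - (@?a p)) => apply: (ropp_cont a)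
  | |- continuous (fun p => Num.min (@?a p) (@?b p)) => apply: (rmin_cont a b)
  | |- continuous (fun p => Num.max (@?a p) (@?b p)) => apply: (rmax_cont a b)
  | |- continuous (fun p => toI (@?a p)) => apply: (toI_comp_cont a)
  | |- continuous (fun p => sval (@?a p)) => apply: (unit_val_comp_cont a)
  | |- continuous (fun p => ?f (@?g p)) => apply: (comp_cont g f)
  | |- continuous _ => assumption
  end.
Ltac continuity := repeat continuity_step.

(* Homotopy is transitive: run the two homotopies at double speed. *)
Lemma homotopic_trans (R : realType) {A B : topologicalType} (f g k : A -> B) :
  homotopic R f g -> homotopic R g k -> homotopic R f k.
Proof.
move=> [H1 [cH1 [H1f H1g]]] [H2 [cH2 [H2g H2k]]].
exists (fun p => if sval p.2 - 2^-1 <= 0 then H1 (p.1, toI (2 * sval p.2))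
                 else H2 (p.1, toI (2 * sval p.2 - 1))).
split.
  apply: paste_cont; try continuity.
  move=> [a u] /= hu.
  rewrite (_ : toI _ = i1); last by apply: toI_ge1; lra.
  by rewrite (_ : toI _ = i0) ?H1g ?H2g //; apply: toI_le0; lra.
split => a /=.
- rewrite ifT; last by lra.
  by rewrite (_ : toI _ = i0) ?H1f //; apply: toI_le0; lra.
- rewrite ifF; last by apply/negbTE; rewrite -ltNge; lra.
  by rewrite (_ : toI _ = i1) ?H2k //; apply: toI_ge1; lra.
Qed.

Lemma slice_cont {R : realType} {Z W : topologicalType}
  (g : Z * unit_interval R -> W) (z : Z) :
  continuous g -> continuous (fun s : unit_interval R => g (z, s)).
Proof.
move=> cg; apply: (@comp_cont _ _ _ (fun s : unit_interval R => (z, s))) => //.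
by apply: pair_cont; [exact: cst_cont | exact: id_cont].
Qed.

Section HomotopyFibre.
Context {R : realType}.
Local Notation I := (unit_interval R).
Context {X Y : topologicalType} {r : X -> Y} {y0 : Y}.
Local Notation A := (hofib R r y0).

Definition hofib_mk {x : X} {g : I -> Y} (cg : continuous g)
    (g0 : g i0 = r x) (g1 : g i1 = y0) : A :=
  exist _ (x, g : {compact-open, I -> Y}) (mem_set (conj cg (conj g0 g1))).

Definition hofib_point (a : A) : X := (sval a).1.
Definition hofib_path (p : A * I) : Y := ((sval p.1).2 : I -> Y) p.2.

Lemma hofib_path_slice_cont (a : A) : continuous ((sval a).2 : I -> Y).
Proof. by case: a => -[x g] /= /set_mem []. Qed.

Lemma hofib_path0 (a : A) : hofib_path (a, i0) = r (hofib_point a).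
Proof. by case: a => -[x g] ag; have [_ []] := set_mem ag. Qed.

Lemma hofib_path1 (a : A) : hofib_path (a, i1) = y0.
Proof. by case: a => -[x g] ag; have [_ []] := set_mem ag. Qed.

Lemma hofib_point_cont : continuous hofib_point.
Proof. exact: (comp_cont _ _ (sval_cont _) fst_cont). Qed.

Lemma hofib_path_cont : continuous hofib_path.
Proof.
apply: (uncurry_cont (fun a : A => (sval a).2)); last exact: hofib_path_slice_cont.
exact: (comp_cont _ _ (sval_cont _) snd_cont).
Qed.

Lemma hofib_ext (a b : A) : hofib_point a = hofib_point b ->
  (forall s, hofib_path (a, s) = hofib_path (b, s)) -> a = b.
Proof.
move: a b => [[x g] ag] [[x' g'] bg]; rewrite /hofib_point /hofib_path /= => xx' gg'.
apply: eq_sig_hprop => [? ? ?|/=]; first exact: Prop_irrelevance.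
by rewrite xx' (_ : g = g') //; apply: funext.
Qed.

Lemma hofib_mk_cont {Z : topologicalType} {x : Z -> X} {g : Z * I -> Y}
    (cg : continuous g) (g0 : forall z, g (z, i0) = r (x z))
    (g1 : forall z, g (z, i1) = y0) :
  continuous x ->
  continuous (fun z => hofib_mk (slice_cont g z cg) (g0 z) (g1 z)).
Proof.
move=> cx; apply: into_sub_cont; apply: pair_cont => //.
exact: (curry_cont g cg).
Qed.

End HomotopyFibre.

Section LoopSpace.
Context {R : realType}.
Local Notation I := (unit_interval R).
Context {X Y : topologicalType} {l : Y -> X} {x0 : X} {y0 : Y} {l_based : l y0 = x0}.
Local Notation F := (hofib R l x0).
Local Notation B := (loops R (hofib_pt R l l_based)).

Definition loop_eval (p : B * I) : F := (sval p.1 : I -> F) p.2.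
Definition loop_base (p : B * I) : Y := hofib_point (loop_eval p).
Definition loop_fibre (q : (B * I) * I) : X := hofib_path (loop_eval q.1, q.2).

Lemma loop_eval_cont : continuous loop_eval.
Proof.
apply: (uncurry_cont (fun q : B => sval q)); first exact: sval_cont.
by move=> [g /= /set_mem []].
Qed.

Lemma loop_base_cont : continuous loop_base.
Proof. exact: (comp_cont _ _ loop_eval_cont hofib_point_cont). Qed.

Lemma loop_fibre_cont : continuous loop_fibre.
Proof.
apply: (comp_cont _ _ _ hofib_path_cont).
by apply: pair_cont; [exact: (comp_cont _ _ fst_cont loop_eval_cont) | exact: snd_cont].
Qed.

Lemma loop_eval0 (q : B) : loop_eval (q, i0) = hofib_pt R l l_based.
Proof. by case: q => g qg; have [_ []] := set_mem qg. Qed.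

Lemma loop_eval1 (q : B) : loop_eval (q, i1) = hofib_pt R l l_based.
Proof. by case: q => g qg; have [_ []] := set_mem qg. Qed.

Lemma loop_base0 (q : B) : loop_base (q, i0) = y0.
Proof. by rewrite /loop_base loop_eval0. Qed.

Lemma loop_base1 (q : B) : loop_base (q, i1) = y0.
Proof. by rewrite /loop_base loop_eval1. Qed.

Lemma loop_fibre_left (q : B) t : loop_fibre ((q, i0), t) = x0.
Proof. by rewrite /loop_fibre loop_eval0. Qed.

Lemma loop_fibre_right (q : B) t : loop_fibre ((q, i1), t) = x0.
Proof. by rewrite /loop_fibre loop_eval1. Qed.

Lemma loop_fibre_bot p : loop_fibre (p, i0) = l (loop_base p).
Proof. exact: hofib_path0. Qed.

Lemma loop_fibre_top p : loop_fibre (p, i1) = x0.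
Proof. exact: hofib_path1. Qed.

Lemma loop_ext (p q : B) :
  (forall s, loop_base (p, s) = loop_base (q, s)) ->
  (forall s t, loop_fibre ((p, s), t) = loop_fibre ((q, s), t)) -> p = q.
Proof.
move: p q => [g pg] [g' qg] /= gg' ff'.
apply: eq_sig_hprop => [? ? ?|/=]; first exact: Prop_irrelevance.
by apply: funext => s; apply: hofib_ext; [exact: gg' | exact: ff' s].
Qed.

Section LoopOfData.
Context {Z : topologicalType} {b : Z * I -> Y} {D : (Z * I) * I -> X}
  (b_cont : continuous b) (D_cont : continuous D)
  (D_bot : forall p, D (p, i0) = l (b p)) (D_top : forall p, D (p, i1) = x0)
  (b0 : forall z, b (z, i0) = y0) (b1 : forall z, b (z, i1) = y0)
  (D_left : forall z t, D ((z, i0), t) = x0)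
  (D_right : forall z t, D ((z, i1), t) = x0).

Definition loop_point (p : Z * I) : F :=
  hofib_mk (slice_cont D p D_cont) (D_bot p) (D_top p).

Lemma loop_point_cont : continuous loop_point.
Proof. exact: hofib_mk_cont. Qed.

Lemma loop_mk_subproof (z : Z) :
  ((fun s => loop_point (z, s)) : {compact-open, I -> F})
    \in loop_set R (hofib_pt R l l_based).
Proof.
apply/mem_set; split; first exact: (slice_cont _ _ loop_point_cont).
by split; apply: hofib_ext => [|s]; rewrite /hofib_point /hofib_path /= ?b0 ?b1 ?D_left ?D_right.
Qed.

Definition loop_mk (z : Z) : B :=
  exist (fun g => g \in loop_set R (hofib_pt R l l_based)) _ (loop_mk_subproof z).

Lemma loop_mk_cont : continuous loop_mk.
Proof. exact/into_sub_cont/curry_cont/loop_point_cont. Qed.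

Lemma loop_mk_base z s : loop_base (loop_mk z, s) = b (z, s).
Proof. by []. Qed.

Lemma loop_mk_fibre z s t : loop_fibre ((loop_mk z, s), t) = D ((z, s), t).
Proof. by []. Qed.

End LoopOfData.

End LoopSpace.

Section HofibLoopEquivalence.
Variable R : realType.
Local Notation I := (unit_interval R).
Variables (X Y : topologicalType) (x0 : X) (y0 : Y) (r : X -> Y) (l : Y -> X).
Hypotheses (r_cts : continuous r) (l_cts : continuous l)
  (r_based : r x0 = y0) (l_based : l y0 = x0).
Variable h : X * I -> X.
Hypotheses (h_cts : continuous h) (h_start : forall x, h (x, i0) = x)
  (h_end : forall x, h (x, i1) = l (r x)) (h_based : forall t, h (x0, t) = x0).

Local Notation A := (hofib R r y0).
Local Notation F := (hofib R l x0).
Local Notation B := (loops R (hofib_pt R l l_based)).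

(* For chi,
   E is the tail of l o rho; a second instance yields a homotopy on
   Omega(F). *)
Section LoopOfFamily.
Context {Z : topologicalType} (x : Z -> X) (rho : Z * I -> Y) (E : (Z * I) * I -> X).
Hypotheses (x_cts : continuous x) (rho_cts : continuous rho) (E_cts : continuous E)
  (rho0 : forall z, rho (z, i0) = r (x z)) (rho1 : forall z, rho (z, i1) = y0)
  (E_bot : forall p, E (p, i0) = l (rho p)) (E_top : forall p, E (p, i1) = x0)
  (E_right : forall z t, E ((z, i1), t) = x0).

Definition detour (p : Z * I) : X :=
  if sval p.2 - 2^-1 <= 0 then h (x p.1, toI (2 * sval p.2))
  else E ((p.1, i0), toI (2 * sval p.2 - 1)).

Lemma detour_cont : continuous detour.
Proof.
apply: paste_cont; try continuity.
move=> [z a] /= ha.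
have -> : toI (2 * sval a) = i1 by apply: toI_ge1; lra.
have -> : toI (2 * sval a - 1) = i0 by apply: toI_le0; lra.
by rewrite h_end E_bot rho0.
Qed.

Lemma detour0 z : detour (z, i0) = x z.
Proof. by rewrite /detour /= ifT ?toI_le0 ?h_start //; lra. Qed.

Lemma detour1 z : detour (z, i1) = x0.
Proof.
rewrite /detour /= ifF; last by apply/negbTE; rewrite -ltNge; lra.
by rewrite toI_ge1 ?E_top //; lra.
Qed.

Definition base_loop (p : Z * I) : Y :=
  if sval p.2 - 2^-1 <= 0 then r (detour (p.1, toI (1 - 2 * sval p.2)))
  else rho (p.1, toI (2 * sval p.2 - 1)).

Lemma base_loop_cont : continuous base_loop.
Proof.
apply: paste_cont; try continuity; first exact: detour_cont.
move=> [z a] /= ha.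
have -> : toI (1 - 2 * sval a) = i0 by apply: toI_le0; lra.
have -> : toI (2 * sval a - 1) = i0 by apply: toI_le0; lra.
by rewrite detour0 rho0.
Qed.

Lemma base_loop0 z : base_loop (z, i0) = y0.
Proof. by rewrite /base_loop /= ifT ?toI_ge1 ?detour1 //; lra. Qed.

Lemma base_loop1 z : base_loop (z, i1) = y0.
Proof.
rewrite /base_loop /= ifF; last by apply/negbTE; rewrite -ltNge; lra.
by rewrite toI_ge1 ?rho1 //; lra.
Qed.

(* Over the first half of base_loop: for a in I, a path in X from
   l r (detour (1 - a)) to x0, running h backwards and then along the end
   of the detour.  It is the constant path at a = 0 and E((z,0),-) at a = 1
   (up to reparametrisation, see fibre_loop_cont). *)
Definition return_path (q : (Z * I) * I) : X :=
  if sval q.1.2 + sval q.2 - 1 <= 0 then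
    h (detour (q.1.1, toI (1 - sval q.1.2 - Num.min (sval q.1.2) (sval q.2))),
       toI (1 - 2 * sval q.2))
  else detour (q.1.1,
    toI (Num.max (3 / 2 * sval q.1.2 + sval q.2 / 2 - 1) (2 * sval q.2 - 1))).

Lemma return_path_cont : continuous return_path.
Proof.
apply: paste_cont; try continuity; try exact: detour_cont.
move=> [[z a] t] /= ha.
have a0 := unit_ge0 a; have a1 := unit_le1 a.
have t0 := unit_ge0 t; have t1 := unit_le1 t.
case: (lerP (sval t) (2^-1)) => ht.
- have -> : Num.min (sval a) (sval t) = sval t by rewrite min_r //; lra.
  have -> : toI (1 - sval a - sval t) = i0 by apply: toI_le0; lra.
  rewrite detour0 max_l; last lra.
  rewrite /detour /= clamp_id; last lra.
  by rewrite ifT; [congr h; congr pair; apply: toI_eq | ]; lra.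
- have -> : Num.min (sval a) (sval t) = sval a by rewrite min_l //; lra.
  have -> : toI (1 - 2 * sval t) = i0 by apply: toI_le0; lra.
  rewrite h_start max_r; last lra.
  by congr detour; congr pair; apply: toI_eq; lra.
Qed.

Definition fibre_loop (q : (Z * I) * I) : X :=
  if sval q.1.2 - 2^-1 <= 0 then return_path ((q.1.1, toI (2 * sval q.1.2)), q.2)
  else E ((q.1.1, toI (2 * sval q.1.2 - 1)), q.2).

Lemma fibre_loop_cont : continuous fibre_loop.
Proof.
apply: paste_cont; try continuity; try exact: return_path_cont.
move=> [[z a] t] /= ha.
have t0 := unit_ge0 t; have t1 := unit_le1 t.
have -> : toI (2 * sval a) = i1 by apply: toI_ge1; lra.
have -> : toI (2 * sval a - 1) = i0 by apply: toI_le0; lra.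
rewrite /return_path /=; case: ifPn => ht.
- have -> : t = i0 by apply: val_inj => /=; lra.
  rewrite E_bot rho0 -h_end.
  have -> : toI (1 - 1 - Num.min 1 (sval (@i0 R))) = i0.
    by apply: toI_le0; rewrite /= min_r ?ler01 //; lra.
  by rewrite detour0; congr h; congr pair; apply: toI_ge1; rewrite /=; lra.
- rewrite max_l; last lra.
  rewrite /detour /= clamp_id; last lra.
  rewrite ifF; last by apply/negbTE; rewrite -ltNge; lra.
  by congr E; congr pair; apply: toI_valE; lra.
Qed.

Lemma fibre_loop_bot p : fibre_loop (p, i0) = l (base_loop p).
Proof.
case: p => z a; have a0 := unit_ge0 a; have a1 := unit_le1 a.
rewrite /fibre_loop /base_loop /=; case: ifPn => ha; last by rewrite E_bot.
rewrite /return_path /= clamp_id; last lra.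
rewrite ifT; last lra.
rewrite -h_end; congr h; congr pair; last by apply: toI_ge1; lra.
by congr detour; congr pair; apply: toI_eq; rewrite min_r //; lra.
Qed.

Lemma fibre_loop_top p : fibre_loop (p, i1) = x0.
Proof.
case: p => z a; have a0 := unit_ge0 a; have a1 := unit_le1 a.
rewrite /fibre_loop /=; case: ifPn => ha; last by rewrite E_top.
rewrite /return_path /= clamp_id; last lra.
case: ifPn => hs.
- rewrite toI_ge1 ?detour1 ?h_based //.
  by rewrite min_l; lra.
- by rewrite toI_ge1 ?detour1 // max_r; lra.
Qed.

Lemma fibre_loop_left z t : fibre_loop ((z, i0), t) = x0.
Proof.
have t0 := unit_ge0 t; have t1 := unit_le1 t.
rewrite /fibre_loop /= ifT; last lra.
rewrite /return_path /= clamp_id; last lra.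
rewrite ifT; last lra.
by rewrite toI_ge1 ?detour1 ?h_based // min_l; lra.
Qed.

Lemma fibre_loop_right z t : fibre_loop ((z, i1), t) = x0.
Proof.
rewrite /fibre_loop /= ifF; last by apply/negbTE; rewrite -ltNge; lra.
by rewrite toI_ge1 ?E_right //; lra.
Qed.

Definition loop_of_family : Z -> B :=
  loop_mk base_loop_cont fibre_loop_cont fibre_loop_bot fibre_loop_top
    base_loop0 base_loop1 fibre_loop_left fibre_loop_right.

Lemma loop_of_family_cont : continuous loop_of_family.
Proof. exact: loop_mk_cont. Qed.

Lemma loop_of_family_base z s : loop_base (loop_of_family z, s) = base_loop (z, s).
Proof. by []. Qed.

Lemma loop_of_family_fibre z s t :
  loop_fibre ((loop_of_family z, s), t) = fibre_loop ((z, s), t).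
Proof. by []. Qed.

End LoopOfFamily.

(* chi : hofib(r) -> Omega(F) applies the loop construction to the identity
   family over hofib(r), with tail paths s |-> l o gamma restricted to [s,1]. *)
Definition chi_tail (q : (A * I) * I) : X :=
  l (hofib_path (q.1.1, toI (Num.min 1 (sval q.1.2 + sval q.2)))).

Lemma chi_tail_cont : continuous chi_tail.
Proof. have := @hofib_path_cont R X Y r y0; rewrite /chi_tail => ?; continuity. Qed.

Lemma chi_tail_bot p : chi_tail (p, i0) = l (hofib_path p).
Proof.
case: p => a s; rewrite /chi_tail /=; congr (l (hofib_path (a, _))).
by apply: toI_valE; rewrite addr0 min_r // unit_le1.
Qed.

Lemma chi_tail_top p : chi_tail (p, i1) = x0.
Proof.
case: p => a s; have s0 := unit_ge0 s.
by rewrite /chi_tail /= toI_ge1 ?hofib_path1 ?l_based // min_l; lra.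
Qed.

Lemma chi_tail_right a t : chi_tail ((a, i1), t) = x0.
Proof.
have t0 := unit_ge0 t.
by rewrite /chi_tail /= toI_ge1 ?hofib_path1 ?l_based // min_l; lra.
Qed.

Definition chi : A -> B :=
  loop_of_family hofib_point hofib_path chi_tail
    hofib_point_cont hofib_path_cont chi_tail_cont
    hofib_path0 hofib_path1 chi_tail_bot chi_tail_top chi_tail_right.

Lemma chi_cont : continuous chi.
Proof. exact: loop_of_family_cont. Qed.

Lemma loop_base0_r (q : B) : loop_base (q, i0) = r x0.
Proof. by rewrite loop_base0 r_based. Qed.

Definition chi_inv (q : B) : A :=
  hofib_mk (slice_cont loop_base q loop_base_cont) (loop_base0_r q) (loop_base1 q).

Lemma chi_inv_cont : continuous chi_inv.
Proof. exact: (hofib_mk_cont loop_base_cont loop_base0_r loop_base1 (cst_cont x0)). Qed.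

(* chi_inv (chi (x, gamma)) = (x0, (r o w)^-1 . gamma), w the detour of
   (x, gamma).  It is deformed to (x, gamma) by moving the point backwards
   along w: at time u the point is w(1 - u), and the path runs along r o w
   from there to x0 before following gamma. *)
Definition chi_detour (p : A * I) : X := detour hofib_point chi_tail p.

Lemma chi_detour_cont : continuous chi_detour.
Proof.
exact: (detour_cont hofib_point hofib_path chi_tail hofib_point_cont chi_tail_cont
  hofib_path0 chi_tail_bot).
Qed.

Definition unwind_time (q : (A * I) * I) : R :=
  - (1 - sval q.1.2) + sval q.2 * (1 + (1 - sval q.1.2)).

Definition unwind_point (p : A * I) : X := chi_detour (p.1, toI (1 - sval p.2)).

Definition unwind_path (q : (A * I) * I) : Y :=
  if unwind_time q <= 0 then r (chi_detour (q.1.1, toI (- unwind_time q)))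
  else hofib_path (q.1.1, toI (unwind_time q)).

Lemma unwind_point_cont : continuous unwind_point.
Proof. have := chi_detour_cont; rewrite /unwind_point => ?; continuity. Qed.

Lemma unwind_path_cont : continuous unwind_path.
Proof.
have := chi_detour_cont; have := @hofib_path_cont R X Y r y0 => ? ?.
apply: paste_cont; rewrite /unwind_time; try continuity.
move=> [[a u] s] /= hs.
rewrite (@toI_le0 R (- _)); last lra.
by rewrite (@toI_le0 R) /chi_detour ?detour0 ?hofib_path0 //; lra.
Qed.

Lemma unwind_path0 p : unwind_path (p, i0) = r (unwind_point p).
Proof.
case: p => a u; have u0 := unit_ge0 u; have u1 := unit_le1 u.
rewrite /unwind_path /unwind_point /unwind_time /= ifT; last lra.
by congr (r (chi_detour (a, _))); apply: toI_eq; lra.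
Qed.

Lemma unwind_path1 p : unwind_path (p, i1) = y0.
Proof.
case: p => a u; have u0 := unit_ge0 u; have u1 := unit_le1 u.
rewrite /unwind_path /unwind_time /= ifF; last by apply/negbTE; rewrite -ltNge; lra.
by rewrite toI_ge1 ?hofib_path1 //; lra.
Qed.

Definition unwind (p : A * I) : A :=
  hofib_mk (slice_cont unwind_path p unwind_path_cont) (unwind_path0 p) (unwind_path1 p).

Lemma chi_inv_chi_homotopic : homotopic R (chi_inv \o chi) idfun.
Proof.
exists unwind; split; first exact: hofib_mk_cont unwind_point_cont.
split => a; apply: hofib_ext; rewrite /hofib_point /hofib_path /=.
- rewrite /unwind_point toI_ge1 /=; last lra.
  by rewrite /chi_detour detour1 //; exact: chi_tail_top.
- move=> s; have s0 := unit_ge0 s; have s1 := unit_le1 s.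
  rewrite /unwind_path /unwind_time loop_of_family_base /base_loop /=.
  case: ifPn => h1; case: ifPn => h2.
  + by congr (r (chi_detour (a, _))); apply: toI_eq; lra.
  + by exfalso; move: h1 h2; rewrite -ltNge; lra.
  + by exfalso; move: h1 h2; rewrite -ltNge; lra.
  + by congr (hofib_path (a, _)); apply: toI_eq; lra.
- by rewrite /unwind_point toI_le0 /chi_detour ?detour0 //=; lra.
- move=> s; have s0 := unit_ge0 s; have s1 := unit_le1 s.
  rewrite /unwind_path /unwind_time /=; case: ifPn => hs.
  + have -> : s = i0 by apply: val_inj => /=; lra.
    rewrite (@toI_le0 R); last by rewrite /=; lra.
    by rewrite /chi_detour detour0 -hofib_path0.
  + by rewrite (@toI_valE R _ s) //; lra.
Qed.

Lemma detour_ext {Z Z' : topologicalType} (x : Z -> X) (E : (Z * I) * I -> X)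
    (x' : Z' -> X) (E' : (Z' * I) * I -> X) z z' :
  x z = x' z' -> (forall t, E ((z, i0), t) = E' ((z', i0), t)) ->
  forall a, detour x E (z, a) = detour x' E' (z', a).
Proof. by move=> xx' EE' a; rewrite /detour /= xx' EE'. Qed.

Lemma base_loop_ext {Z Z' : topologicalType} (x : Z -> X) rho (E : (Z * I) * I -> X)
    (x' : Z' -> X) rho' (E' : (Z' * I) * I -> X) z z' :
  x z = x' z' -> (forall s, rho (z, s) = rho' (z', s)) ->
  (forall s t, E ((z, s), t) = E' ((z', s), t)) ->
  forall s, base_loop x rho E (z, s) = base_loop x' rho' E' (z', s).
Proof.
move=> xx' rr' EE' s.
by rewrite /base_loop /= rr' (@detour_ext _ _ x E x' E' z z' xx' (EE' i0)).
Qed.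

Lemma fibre_loop_ext {Z Z' : topologicalType} (x : Z -> X) (E : (Z * I) * I -> X)
    (x' : Z' -> X) (E' : (Z' * I) * I -> X) z z' :
  x z = x' z' -> (forall s t, E ((z, s), t) = E' ((z', s), t)) ->
  forall s t, fibre_loop x E ((z, s), t) = fibre_loop x' E' ((z', s), t).
Proof.
move=> xx' EE' s t.
by rewrite /fibre_loop /return_path /= EE' !(@detour_ext _ _ x E x' E' z z' xx' (EE' i0)).
Qed.

(* First homotopy on Omega(F): the loop construction for the family of
   points (x0, loop_base q) of hofib(r) over Omega(F) * I, whose tail paths
   interpolate between the tails of l o loop_base q (at u = 0, giving
   chi (chi_inv q)) and the fibre paths of q itself (at u = 1). *)
Definition stretch_base (p : (B * I) * I) : Y := loop_base (p.1.1, p.2).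

Definition stretch_tail (q : ((B * I) * I) * I) : X :=
  loop_fibre ((q.1.1.1,
    toI (Num.min 1 (sval q.1.2 + sval q.2 * Num.min 1 (2 - 2 * sval q.1.1.2)))),
    toI (sval q.2 * Num.min 1 (2 * sval q.1.1.2))).

Lemma stretch_base_cont : continuous stretch_base.
Proof. have := @loop_base_cont R X Y l x0 y0 l_based; rewrite /stretch_base => ?; continuity. Qed.

Lemma stretch_tail_cont : continuous stretch_tail.
Proof. have := @loop_fibre_cont R X Y l x0 y0 l_based; rewrite /stretch_tail => ?; continuity. Qed.

Lemma stretch_base0 z : stretch_base (z, i0) = r x0.
Proof. exact: loop_base0_r. Qed.

Lemma stretch_base1 z : stretch_base (z, i1) = y0.
Proof. exact: loop_base1. Qed.

Lemma stretch_tail_bot p : stretch_tail (p, i0) = l (stretch_base p).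
Proof.
case: p => -[q u] s; have s1 := unit_le1 s.
rewrite /stretch_tail /stretch_base /= -loop_fibre_bot mul0r addr0 min_r //.
by rewrite toI_val (@toI_le0 R) //; lra.
Qed.

Lemma stretch_tail_top p : stretch_tail (p, i1) = x0.
Proof.
case: p => -[q u] s; have s0 := unit_ge0 s; have u0 := unit_ge0 u; have u1 := unit_le1 u.
rewrite /stretch_tail /=.
case: (lerP (2^-1) (sval u)) => hu.
- rewrite (@toI_ge1 R (1 * _)) ?loop_fibre_top //.
  by rewrite mul1r min_l; lra.
- rewrite (@toI_ge1 R (Num.min 1 (_ + _))) ?loop_fibre_right //.
  rewrite (@min_l _ _ 1 (2 - 2 * sval u)); last lra.
  by rewrite min_l; lra.
Qed.

Lemma stretch_tail_right z t : stretch_tail ((z, i1), t) = x0.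
Proof.
case: z => q u; have t0 := unit_ge0 t; have u0 := unit_ge0 u; have u1 := unit_le1 u.
rewrite /stretch_tail /= (@toI_ge1 R (Num.min 1 _)) ?loop_fibre_right //.
have m0 : 0 <= Num.min 1 (2 - 2 * sval u) by rewrite le_min ler01 /=; lra.
by rewrite min_l //; have := mulr_ge0 t0 m0; lra.
Qed.

Definition stretch : B * I -> B :=
  loop_of_family (fun _ => x0) stretch_base stretch_tail (cst_cont x0)
    stretch_base_cont stretch_tail_cont stretch_base0 stretch_base1
    stretch_tail_bot stretch_tail_top stretch_tail_right.

Lemma stretch_cont : continuous stretch.
Proof. exact: loop_of_family_cont. Qed.

Lemma stretch_start q : stretch (q, i0) = chi (chi_inv q).
Proof.
have tails_agree s t :
    stretch_tail (((q, i0), s), t) = chi_tail (((chi_inv q), s), t).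
  rewrite /stretch_tail /chi_tail /= -loop_fibre_bot.
  rewrite (@min_l _ _ 1 (2 - 2 * 0)); last lra.
  by rewrite (@min_r _ _ 1 (2 * 0)) ?mulr1 ?mulr0 ?(@toI_le0 R 0) //; lra.
apply: loop_ext => [s|s t]; rewrite /stretch /chi.
- rewrite !loop_of_family_base.
  by apply: base_loop_ext => [|s'|s' t']; [by [] | by [] | exact: tails_agree].
- rewrite !loop_of_family_fibre.
  by apply: fibre_loop_ext => [|s' t']; [by [] | exact: tails_agree].
Qed.

(* Second homotopy on Omega(F): reparametrise q by s |-> max(0, (2-u)s - (1-u)),
   from the loop "constant, then q" (u = 0) to q itself (u = 1). *)
Definition reparam_time (p : (B * I) * I) : R :=
  Num.max 0 ((2 - sval p.1.2) * sval p.2 - (1 - sval p.1.2)).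

Definition reparam_base (p : (B * I) * I) : Y := loop_base (p.1.1, toI (reparam_time p)).

Definition reparam_fibre (q : ((B * I) * I) * I) : X :=
  loop_fibre ((q.1.1.1, toI (reparam_time q.1)), q.2).

Lemma reparam_base_cont : continuous reparam_base.
Proof.
have := @loop_base_cont R X Y l x0 y0 l_based.
by rewrite /reparam_base /reparam_time => ?; continuity.
Qed.

Lemma reparam_fibre_cont : continuous reparam_fibre.
Proof.
have := @loop_fibre_cont R X Y l x0 y0 l_based.
by rewrite /reparam_fibre /reparam_time => ?; continuity.
Qed.

Lemma reparam_time0 z : toI (reparam_time (z, i0)) = i0.
Proof.
case: z => q u; have u1 := unit_le1 u.
by apply: toI_le0; rewrite /reparam_time /= max_l; lra.
Qed.

Lemma reparam_time1 z : toI (reparam_time (z, i1)) = i1.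
Proof.
case: z => q u; have u1 := unit_le1 u.
by apply: toI_ge1; rewrite /reparam_time /= max_r; lra.
Qed.

Lemma reparam_fibre_bot p : reparam_fibre (p, i0) = l (reparam_base p).
Proof. exact: loop_fibre_bot. Qed.

Lemma reparam_fibre_top p : reparam_fibre (p, i1) = x0.
Proof. exact: loop_fibre_top. Qed.

Lemma reparam_base0 z : reparam_base (z, i0) = y0.
Proof. by rewrite /reparam_base reparam_time0 loop_base0. Qed.

Lemma reparam_base1 z : reparam_base (z, i1) = y0.
Proof. by rewrite /reparam_base reparam_time1 loop_base1. Qed.

Lemma reparam_fibre_left z t : reparam_fibre ((z, i0), t) = x0.
Proof. by rewrite /reparam_fibre /= reparam_time0 loop_fibre_left. Qed.

Lemma reparam_fibre_right z t : reparam_fibre ((z, i1), t) = x0.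
Proof. by rewrite /reparam_fibre /= reparam_time1 loop_fibre_right. Qed.

Definition reparam : B * I -> B :=
  loop_mk reparam_base_cont reparam_fibre_cont reparam_fibre_bot reparam_fibre_top
    reparam_base0 reparam_base1 reparam_fibre_left reparam_fibre_right.

Lemma reparam_cont : continuous reparam.
Proof. exact: loop_mk_cont. Qed.

Lemma reparam_end q : reparam (q, i1) = q.
Proof.
have time_id s : toI (reparam_time ((q, i1), s)) = s.
  by apply: toI_valE; rewrite /reparam_time /= max_r; have := unit_ge0 s; lra.
by apply: loop_ext => [s|s t];
  rewrite /reparam ?loop_mk_base ?loop_mk_fibre /reparam_base /reparam_fibre /= time_id.
Qed.

Lemma stretch_detour_end q a :
  detour (fun _ => x0) stretch_tail ((q, i1), a) = x0.
Proof.
rewrite /detour /=; case: ifPn => _; first by rewrite h_based.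
rewrite /stretch_tail /= (@toI_le0 R (Num.min 1 _)) ?loop_fibre_left //.
have := unit_ge0 (toI (2 * sval a - 1)); have := unit_le1 (toI (2 * sval a - 1)).
by rewrite (@min_r _ _ 1 (2 - 2 * 1)) ?min_r; lra.
Qed.

Lemma stretch_end q : stretch (q, i1) = reparam (q, i0).
Proof.
apply: loop_ext => [s|s t]; rewrite /stretch /reparam;
  rewrite ?loop_of_family_base ?loop_mk_base ?loop_of_family_fibre ?loop_mk_fibre;
  have s0 := unit_ge0 s; have s1 := unit_le1 s.
- rewrite /base_loop /reparam_base /reparam_time /=; case: ifPn => hs.
  + rewrite stretch_detour_end r_based (@toI_le0 R (Num.max 0 _)) ?loop_base0 //.
    by rewrite max_l; lra.
  + rewrite /stretch_base /=; congr (loop_base (q, _)); apply: toI_eq.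
    by rewrite max_r; move: hs; rewrite -ltNge; lra.
- rewrite /fibre_loop /reparam_fibre /reparam_time /=; case: ifPn => hs.
  + rewrite (@toI_le0 R (Num.max 0 _)) ?loop_fibre_left; last by rewrite max_l; lra.
    by rewrite /return_path /=; case: ifPn => _; rewrite stretch_detour_end ?h_based.
  + have hs' : 2^-1 < sval s by move: hs; rewrite -ltNge; lra.
    rewrite /stretch_tail /=.
    have -> : Num.min 1 (2 - 2 * 1) = 0 :> R by rewrite min_r; lra.
    have -> : Num.min 1 (2 * 1) = 1 :> R by rewrite min_l; lra.
    rewrite mulr0 addr0 mulr1 toI_val clamp_id; last lra.
    by congr (loop_fibre ((q, _), t)); apply: toI_eq; rewrite max_r ?min_r; lra.
Qed.

Lemma chi_chi_inv_homotopic : homotopic R (chi \o chi_inv) idfun.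
Proof.
apply: (@homotopic_trans R _ _ _ (fun q => stretch (q, i1))).
- exists stretch; split; first exact: stretch_cont.
  by split => q //=; rewrite stretch_start.
- exists reparam; split; first exact: reparam_cont.
  by split => q /=; rewrite ?stretch_end ?reparam_end.
Qed.

End HofibLoopEquivalence.

Arguments chi {R X Y x0 y0 r l} r_cts l_cts r_based l_based {h}.
Arguments chi_inv {R X Y x0 y0 r l} r_based l_based.

Theorem mainTheorem13 (R : realType) (X Y : topologicalType) (x0 : X) (y0 : Y)
  (r : X -> Y) (l : Y -> X)
  (r_cts : continuous r) (l_cts : continuous l)
  (r_based : r x0 = y0) (l_based : l y0 = x0)
  (h : X * unit_interval R -> X) (h_cts : continuous h)
  (h_start : forall x, h (x, i0) = x)
  (h_end : forall x, h (x, i1) = l (r x))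
  (h_based : forall t, h (x0, t) = x0) :
  exists (chi : hofib R r y0 -> loops R (hofib_pt R l l_based))
         (chi_inv : loops R (hofib_pt R l l_based) -> hofib R r y0),
    homotopy_inverse R chi chi_inv.
Proof.
exists (chi r_cts l_cts r_based l_based h_cts h_start h_end h_based),
  (chi_inv r_based l_based).
split; first exact: chi_cont.
split; first exact: chi_inv_cont.
split; [exact: chi_inv_chi_homotopic | exact: chi_chi_inv_homotopic].
Qed.
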